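(* Under the standing assumptions below, one of the following holds: (II') there exist maps $h_1:M\to M'$ and $p_1:N\to N'$ such that for all $m\in M$, $n\in N$: $\phi\left(\left[\begin{smallmatrix} 0 & m\\ 0 & 1\end{smallmatrix}\right]\right)=\left[\begin{smallmatrix} 0 & h_1(m)\\ p_1(0) & 1\end{smallmatrix}\right]$ and $\phi\left(\left[\begin{smallmatrix} 0 & 0\\ n & 1\end{smallmatrix}\right]\right)=\left[\begin{smallmatrix} 0 & h_1(0)\\ p_1(n) & 1\end{smallmatrix}\right]$; (II'') there exist maps $h_2:N\to M'$ and $p_2:M\to N'$ such that for all $m\in M$, $n\in N$: $\phi\left(\left[\begin{smallmatrix} 0 & m\\ 0 & 1\end{smallmatrix}\right]\right)=\left[\begin{smallmatrix} 1 & h_2(0)\\ p_2(m) & 0\end{smallmatrix}\right]$ and $\phi\left(\left[\begin{smallmatrix} 0 & 0\\ n & 1\end{smallmatrix}\right]\right)=\left[\begin{smallmatrix} 1 & h_2(n)\\ p_2(0) & 0\end{smallmatrix}\right]$.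
   Context: All rings have an identity $1\neq 0$. Standing assumptions: $R,S,R',S'$ are rings whose only idempotents are $0$ and $1$; $M$ is an $R$-$S$-bimodule, $N$ an $S$-$R$-bimodule, $M'$ an $R'$-$S'$-bimodule, $N'$ an $S'$-$R'$-bimodule; $T=\left[\begin{smallmatrix} R & M\\ N & S\end{smallmatrix}\right]$ and $T'=\left[\begin{smallmatrix} R' & M'\\ N' & S'\end{smallmatrix}\right]$ are the Morita context rings with both Morita maps zero, i.e. the sets of formal matrices with entrywise addition and product $\left[\begin{smallmatrix} r & m\\ n & s\end{smallmatrix}\right]\left[\begin{smallmatrix} r' & m'\\ n' & s'\end{smallmatrix}\right]=\left[\begin{smallmatrix} rr' & rm'+ms'\\ nr'+sn' & ss'\end{smallmatrix}\right]$; and $\phi:T\to T'$ is a ring isomorphism. *)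

From HB Require Import structures.
From mathcomp Require Import all_boot all_order all_algebra.
Set Implicit Arguments. Unset Strict Implicit. Unset Printing Implicit Defensive.
Import GRing.Theory.
Local Open Scope ring_scope.

Definition only_trivial_idempotents (R : nzRingType) : Prop :=
  forall e : R, e * e = e -> e = 0 \/ e = 1.

Definition is_bimodule (R S : nzRingType) (M : zmodType)
  (l : R -> M -> M) (r : M -> S -> M) : Prop :=
  (forall m, l 1 m = m) /\
  (forall a b m, l (a * b) m = l a (l b m)) /\
  (forall a b m, l (a + b) m = l a m + l b m) /\
  (forall a m m', l a (m + m') = l a m + l a m') /\
  (forall m, r m 1 = m) /\
  (forall m s t, r m (s * t) = r (r m s) t) /\
  (forall m s t, r m (s + t) = r m s + r m t) /\
  (forall m m' s, r (m + m') s = r m s + r m' s) /\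
  (forall a m s, l a (r m s) = r (l a m) s).

(* Formal 2x2 matrices [[r, m], [n, s]] : elements of the Morita context ring. *)
Record mc (R M N S : Type) := MC { m11 : R; m12 : M; m21 : N; m22 : S }.
Arguments MC {R M N S}.

Section MoritaContext.
Variables (R S : nzRingType) (M N : zmodType).
Variables (lRM : R -> M -> M) (rMS : M -> S -> M)
          (lSN : S -> N -> N) (rNR : N -> R -> N).

Definition mc_add (x y : mc R M N S) : mc R M N S :=
  MC (m11 x + m11 y) (m12 x + m12 y) (m21 x + m21 y) (m22 x + m22 y).

(* Product with both Morita maps zero. *)
Definition mc_mul (x y : mc R M N S) : mc R M N S :=
  MC (m11 x * m11 y)
     (lRM (m11 x) (m12 y) + rMS (m12 x) (m22 y))
     (rNR (m21 x) (m11 y) + lSN (m22 x) (m21 y))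
     (m22 x * m22 y).

Definition mc_one : mc R M N S := MC 1 0 0 1.
End MoritaContext.

Definition mc_ring_iso (R S R' S' : nzRingType) (M N M' N' : zmodType)
  (lRM : R -> M -> M) (rMS : M -> S -> M) (lSN : S -> N -> N) (rNR : N -> R -> N)
  (lRM' : R' -> M' -> M') (rMS' : M' -> S' -> M')
  (lSN' : S' -> N' -> N') (rNR' : N' -> R' -> N')
  (phi : mc R M N S -> mc R' M' N' S') : Prop :=
  [/\ bijective phi,
      (forall x y, phi (mc_add x y) = mc_add (phi x) (phi y)),
      (forall x y, phi (mc_mul lRM rMS lSN rNR x y)
                   = mc_mul lRM' rMS' lSN' rNR' (phi x) (phi y))
    & phi (mc_one R S M N) = mc_one R' S' M' N'].

From HB Require Import structures.
From mathcomp Require Import all_boot all_order all_algebra.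
Set Implicit Arguments. Unset Strict Implicit. Unset Printing Implicit Defensive.
Import GRing.Theory.
Local Open Scope ring_scope.

(* Let e = [0 0; 0 1] in T.  It is an idempotent, different from
   0 and 1, hence so is f = phi e in T'.  The diagonal entries of an idempotent
   of T' are idempotents of R' and S', hence 0 or 1; equal diagonal entries
   would force f = 0 or f = 1, so f = [0 u; v 1] or f = [1 u; v 0].
   In T, x = [0 m; 0 0] satisfies e x = 0 and x e = x, while y = [0 0; n 0]
   satisfies e y = y and y e = 0.  These Peirce relations transport along phi,
   and in T' they pin down phi x and phi y: their diagonals vanish, and one
   off-diagonal entry vanishes too, depending on the shape of f.  Since
   [0 m; 0 1] = e + x and [0 0; n 1] = e + y, we obtain (II') when
   f = [0 u; v 1] and (II'') when f = [1 u; v 0]. *)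

Lemma double_eq0 {V : zmodType} {x : V} : x + x = x -> x = 0.
Proof. by move=> xx; apply: (addrI x); rewrite addr0. Qed.

Definition mc_zero (R M N S : zmodType) : mc R M N S := MC 0 0 0 0.
Arguments mc_zero {R M N S}.

Lemma mc_additive0 (R S R' S' : nzRingType) (M N M' N' : zmodType)
    (f : mc R M N S -> mc R' M' N' S') :
  (forall x y, f (mc_add x y) = mc_add (f x) (f y)) -> f mc_zero = mc_zero.
Proof.
move=> fD; have := fD mc_zero mc_zero.
have -> : mc_add mc_zero mc_zero = mc_zero :> mc R M N S.
  by rewrite /mc_add /mc_zero /= !addr0.
case: (f mc_zero) => a u v b; rewrite /mc_add /=.
by case=> /esym/double_eq0 -> /esym/double_eq0 -> /esym/double_eq0 -> /esym/double_eq0 ->.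
Qed.

Section BimoduleLaws.
Variables (R S : nzRingType) (M : zmodType) (l : R -> M -> M) (r : M -> S -> M).
Hypothesis HM : is_bimodule l r.

Lemma bimod_l1 m : l 1 m = m.
Proof. by case: HM. Qed.

Lemma bimod_r1 m : r m 1 = m.
Proof. by case: HM => _ [_ [_ [_ []]]]. Qed.

Lemma bimod_0l m : l 0 m = 0.
Proof. by case: HM => _ [_ [lD _]]; apply: double_eq0; rewrite -lD addr0. Qed.

Lemma bimod_l0 a : l a 0 = 0.
Proof. by case: HM => _ [_ [_ [ldD _]]]; apply: double_eq0; rewrite -ldD addr0. Qed.

Lemma bimod_r0 m : r m 0 = 0.
Proof.
by case: HM => _ [_ [_ [_ [_ [_ [rD _]]]]]]; apply: double_eq0; rewrite -rD addr0.
Qed.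

Lemma bimod_0r s : r 0 s = 0.
Proof.
by case: HM => _ [_ [_ [_ [_ [_ [_ [rdD _]]]]]]]; apply: double_eq0; rewrite -rdD addr0.
Qed.
End BimoduleLaws.

Lemma trivial_idem_absorbL (R : nzRingType) (a c : R) :
  a = 0 \/ a = 1 -> a * c = 0 -> c * a = c -> c = 0.
Proof. by case=> -> ac ca; [rewrite -ca mulr0 | rewrite -ac mul1r]. Qed.

Lemma trivial_idem_absorbR (R : nzRingType) (a c : R) :
  a = 0 \/ a = 1 -> c * a = 0 -> a * c = c -> c = 0.
Proof. by case=> -> ca ac; [rewrite -ac mul0r | rewrite -ca mulr1]. Qed.

Section MoritaContextRing.
Variables (R S : nzRingType) (M N : zmodType).
Variables (lRM : R -> M -> M) (rMS : M -> S -> M)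
          (lSN : S -> N -> N) (rNR : N -> R -> N).
Hypotheses (HM : is_bimodule lRM rMS) (HN : is_bimodule lSN rNR).

Local Notation T := (mc R M N S).
Local Notation "x ** y" := (mc_mul lRM rMS lSN rNR x y) (at level 40).
Local Notation e := (MC 0 0 0 1 : T).

Local Ltac simp_actions :=
  rewrite ?(bimod_0l HM) ?(bimod_l0 HM) ?(bimod_0r HM) ?(bimod_r0 HM)
          ?(bimod_l1 HM) ?(bimod_r1 HM) ?(bimod_0l HN) ?(bimod_l0 HN)
          ?(bimod_0r HN) ?(bimod_r0 HN) ?(bimod_l1 HN) ?(bimod_r1 HN)
          ?mul0r ?mulr0 ?mul1r ?mulr1 ?addr0 ?add0r.

Lemma mul_e_l (x : T) : e ** x = MC 0 0 (m21 x) (m22 x).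
Proof. by case: x => a u v b; rewrite /mc_mul /=; simp_actions. Qed.

Lemma mul_e_r (x : T) : x ** e = MC 0 (m12 x) 0 (m22 x).
Proof. by case: x => a u v b; rewrite /mc_mul /=; simp_actions. Qed.

Lemma e_neq0 : e <> mc_zero.
Proof. by move=> /(congr1 (@m22 _ _ _ _)) /= /eqP; rewrite oner_eq0. Qed.

Lemma e_neq1 : e <> mc_one R S M N.
Proof. by move=> /(congr1 (@m11 _ _ _ _)) /= /eqP; rewrite eq_sym oner_eq0. Qed.

Lemma idem_diag (f : T) : f ** f = f ->
  m11 f * m11 f = m11 f /\ m22 f * m22 f = m22 f.
Proof. by case: f => a u v b [-> _ _ ->]. Qed.

Lemma idem_diag00 (f : T) : f ** f = f -> m11 f = 0 -> m22 f = 0 -> f = mc_zero.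
Proof.
case: f => a u v b /= + a0 b0; rewrite /mc_mul /= a0 b0; simp_actions.
by case=> <- <-.
Qed.

Lemma idem_diag11 (f : T) : f ** f = f -> m11 f = 1 -> m22 f = 1 -> f = mc_one R S M N.
Proof.
case: f => a u v b /= + a0 b0; rewrite /mc_mul /= a0 b0; simp_actions.
by case=> /double_eq0 -> /double_eq0 ->.
Qed.

Lemma annihilated_fixed (f y : T) :
    m11 f = 0 \/ m11 f = 1 -> m22 f = 0 \/ m22 f = 1 ->
    f ** y = mc_zero -> y ** f = y ->
  y = MC 0 (rMS (m12 y) (m22 f)) (rNR (m21 y) (m11 f)) 0.
Proof.
case: f y => a u v b [c p q d] /= Ha Hb [ac _ _ bd] [ca Hp Hq db].
have c0 := trivial_idem_absorbL Ha ac ca; have d0 := trivial_idem_absorbL Hb bd db.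
move: Hp Hq; rewrite c0 d0; simp_actions; by move=> -> ->.
Qed.

Lemma fixed_annihilated (f y : T) :
    m11 f = 0 \/ m11 f = 1 -> m22 f = 0 \/ m22 f = 1 ->
    f ** y = y -> y ** f = mc_zero ->
  y = MC 0 (lRM (m11 f) (m12 y)) (lSN (m22 f) (m21 y)) 0.
Proof.
case: f y => a u v b [c p q d] /= Ha Hb [ac Hp Hq bd] [ca _ _ db].
have c0 := trivial_idem_absorbR Ha ca ac; have d0 := trivial_idem_absorbR Hb db bd.
move: Hp Hq; rewrite c0 d0; simp_actions; by move=> -> ->.
Qed.
End MoritaContextRing.

Section IsomorphismImageOfCorner.
Variables (R S R' S' : nzRingType) (M N M' N' : zmodType).
Variables (lRM : R -> M -> M) (rMS : M -> S -> M)
          (lSN : S -> N -> N) (rNR : N -> R -> N)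
          (lRM' : R' -> M' -> M') (rMS' : M' -> S' -> M')
          (lSN' : S' -> N' -> N') (rNR' : N' -> R' -> N').
Hypotheses (idR' : only_trivial_idempotents R') (idS' : only_trivial_idempotents S').
Hypotheses (HM : is_bimodule lRM rMS) (HN : is_bimodule lSN rNR)
           (HM' : is_bimodule lRM' rMS') (HN' : is_bimodule lSN' rNR').
Variable phi : mc R M N S -> mc R' M' N' S'.
Hypothesis Hphi : mc_ring_iso lRM rMS lSN rNR lRM' rMS' lSN' rNR' phi.

Local Notation "x ** y" := (mc_mul lRM rMS lSN rNR x y) (at level 40).
Local Notation "x **' y" := (mc_mul lRM' rMS' lSN' rNR' x y) (at level 40).
Local Notation e := (MC 0 0 0 1 : mc R M N S).
Local Notation f := (phi e).

Lemma phiD x y : phi (mc_add x y) = mc_add (phi x) (phi y).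
Proof. by case: Hphi. Qed.

Lemma phiM x y : phi (x ** y) = phi x **' phi y.
Proof. by case: Hphi. Qed.

Lemma phi0 : phi mc_zero = mc_zero.
Proof. exact: mc_additive0 phiD. Qed.

Lemma phi_inj : injective phi.
Proof. by case: Hphi => -[g /can_inj]. Qed.

Lemma phi_e_idem : f **' f = f.
Proof. by rewrite -phiM (mul_e_l HM HN). Qed.

Lemma phi_e_diag : (m11 f = 0 /\ m22 f = 1) \/ (m11 f = 1 /\ m22 f = 0).
Proof.
have [/idR' a01 /idS' b01] := idem_diag phi_e_idem.
case: a01 b01 => a0 [] b0; [exfalso | by left | by right | exfalso].
- have := idem_diag00 HM' HN' phi_e_idem a0 b0.
  by rewrite -phi0 => /phi_inj/e_neq0.
- have := idem_diag11 HM' HN' phi_e_idem a0 b0.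
  by case: Hphi => _ _ _ <- /phi_inj/e_neq1.
Qed.

Lemma phi_e_m11_trivial : m11 f = 0 \/ m11 f = 1.
Proof. by case: phi_e_diag => -[->]; [left | right]. Qed.

Lemma phi_e_m22_trivial : m22 f = 0 \/ m22 f = 1.
Proof. by case: phi_e_diag => -[_ ->]; [right | left]. Qed.

Lemma phi_corner12 m :
  phi (MC 0 m 0 0) = MC 0 (rMS' (m12 (phi (MC 0 m 0 0))) (m22 f))
                          (rNR' (m21 (phi (MC 0 m 0 0))) (m11 f)) 0.
Proof.
apply: (annihilated_fixed HM' HN' phi_e_m11_trivial phi_e_m22_trivial).
- by rewrite -phiM (mul_e_l HM HN); exact: phi0.
- by rewrite -phiM (mul_e_r HM HN).
Qed.

Lemma phi_corner21 n :
  phi (MC 0 0 n 0) = MC 0 (lRM' (m11 f) (m12 (phi (MC 0 0 n 0))))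
                          (lSN' (m22 f) (m21 (phi (MC 0 0 n 0)))) 0.
Proof.
apply: (fixed_annihilated HM' HN' phi_e_m11_trivial phi_e_m22_trivial).
- by rewrite -phiM (mul_e_l HM HN).
- by rewrite -phiM (mul_e_r HM HN); exact: phi0.
Qed.

Lemma phi_split12 m : phi (MC 0 m 0 1) = mc_add f (phi (MC 0 m 0 0)).
Proof. by rewrite -phiD /mc_add /= !addr0 add0r. Qed.

Lemma phi_split21 n : phi (MC 0 0 n 1) = mc_add f (phi (MC 0 0 n 0)).
Proof. by rewrite -phiD /mc_add /= !addr0 add0r. Qed.

Lemma alternative_II1 : m11 f = 0 -> m22 f = 1 ->
  exists (h1 : M -> M') (p1 : N -> N'),
    (forall m : M, phi (MC 0 m 0 1) = MC 0 (h1 m) (p1 0) 1) /\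
    (forall n : N, phi (MC 0 0 n 1) = MC 0 (h1 0) (p1 n) 1).
Proof.
move=> a0 b1; exists (fun m => m12 f + m12 (phi (MC 0 m 0 0))),
                    (fun n => m21 f + m21 (phi (MC 0 0 n 0))).
have phi00 : phi (MC 0 0 0 0) = mc_zero := phi0.
split=> [m|n]; rewrite phi00 /=.
- rewrite phi_split12 phi_corner12 /mc_add /= a0 b1.
  by rewrite (bimod_r1 HM') (bimod_r0 HN') !addr0.
- rewrite phi_split21 phi_corner21 /mc_add /= a0 b1.
  by rewrite (bimod_l1 HN') (bimod_0l HM') !addr0.
Qed.

Lemma alternative_II2 : m11 f = 1 -> m22 f = 0 ->
  exists (h2 : N -> M') (p2 : M -> N'),
    (forall m : M, phi (MC 0 m 0 1) = MC 1 (h2 0) (p2 m) 0) /\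
    (forall n : N, phi (MC 0 0 n 1) = MC 1 (h2 n) (p2 0) 0).
Proof.
move=> a1 b0; exists (fun n => m12 f + m12 (phi (MC 0 0 n 0))),
                    (fun m => m21 f + m21 (phi (MC 0 m 0 0))).
have phi00 : phi (MC 0 0 0 0) = mc_zero := phi0.
split=> [m|n]; rewrite phi00 /=.
- rewrite phi_split12 phi_corner12 /mc_add /= a1 b0.
  by rewrite (bimod_r0 HM') (bimod_r1 HN') !addr0.
- rewrite phi_split21 phi_corner21 /mc_add /= a1 b0.
  by rewrite (bimod_l1 HM') (bimod_0l HN') !addr0.
Qed.
End IsomorphismImageOfCorner.

Theorem corollary4p6 (R S R' S' : nzRingType) (M N M' N' : zmodType)
  (lRM : R -> M -> M) (rMS : M -> S -> M) (lSN : S -> N -> N) (rNR : N -> R -> N)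
  (lRM' : R' -> M' -> M') (rMS' : M' -> S' -> M')
  (lSN' : S' -> N' -> N') (rNR' : N' -> R' -> N')
  (idR : only_trivial_idempotents R) (idS : only_trivial_idempotents S)
  (idR' : only_trivial_idempotents R') (idS' : only_trivial_idempotents S')
  (HM : is_bimodule lRM rMS) (HN : is_bimodule lSN rNR)
  (HM' : is_bimodule lRM' rMS') (HN' : is_bimodule lSN' rNR')
  (phi : mc R M N S -> mc R' M' N' S')
  (Hphi : mc_ring_iso lRM rMS lSN rNR lRM' rMS' lSN' rNR' phi) :
  (exists (h1 : M -> M') (p1 : N -> N'),
      (forall m : M, phi (MC 0 m 0 1) = MC 0 (h1 m) (p1 0) 1) /\
      (forall n : N, phi (MC 0 0 n 1) = MC 0 (h1 0) (p1 n) 1))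
  \/
  (exists (h2 : N -> M') (p2 : M -> N'),
      (forall m : M, phi (MC 0 m 0 1) = MC 1 (h2 0) (p2 m) 0) /\
      (forall n : N, phi (MC 0 0 n 1) = MC 1 (h2 n) (p2 0) 0)).
Proof.
case: (phi_e_diag idR' idS' HM HN HM' HN' Hphi) => -[a b]; [left | right].
- exact: (alternative_II1 idR' idS' HM HN HM' HN' Hphi a b).
- exact: (alternative_II2 idR' idS' HM HN HM' HN' Hphi a b).
Qed.
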